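(* Let $p$ be a prime. Then $\mathcal{M}_p^{(1)}\subseteq p\cdot\mathcal{N}_p=\{pm : m\in\mathcal{N}_p\}$.
   Context: For positive integers $k,n$ let $S_k(n)=\sum_{i=1}^{n} i^k$. For an integer $a$, $\mathcal{M}_a$ denotes the set of positive integers $n$ such that $S_n(n)\equiv a\pmod{n}$. For a prime $p$, $\mathcal{M}_p^{(1)}=\{n\in\mathcal{M}_p : p\mid n,\ p^2\nmid n\}$. For a prime $p$, the set of primes $\mathcal{Q}_p$ is defined recursively (by induction on $q$, since prime divisors of $q-1$ are smaller than $q$): a prime $q$ belongs to $\mathcal{Q}_p$ if and only if (a) $q-1$ is square-free, (b) $p-1\nmid q-1$, and (c) every prime divisor $t$ of $q-1$ satisfies $t=p$ or $t\in\mathcal{Q}_p$. Further, $\mathcal{N}_p$ is the set of positive integers $n$ that are square-free, satisfy $p-1\nmid n$, and all of whose prime divisors lie in $\mathcal{Q}_p$. *)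

From mathcomp Require Import all_boot.
Set Implicit Arguments. Unset Strict Implicit. Unset Printing Implicit Defensive.

Definition S (k n : nat) : nat := \sum_(1 <= i < n.+1) i ^ k.

Definition squarefree (n : nat) : bool :=
  [forall d : 'I_n.+1, (1 < d) ==> ~~ (d * d %| n)].

Definition inM (a n : nat) : Prop := 0 < n /\ S n n = a %[mod n].

Definition inM1 (p n : nat) : Prop := inM p n /\ p %| n /\ ~~ (p * p %| n).

(* Q_p defined by recursion with fuel; fuel q suffices since prime
   divisors of q-1 are < q. *)
Fixpoint inQ_fuel (p fuel q : nat) : bool :=
  match fuel with
  | 0 => false
  | k.+1 => [&& prime q, squarefree q.-1, ~~ (p.-1 %| q.-1) &
             all (fun t => (t == p) || inQ_fuel p k t) (primes q.-1)]
  end.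

Definition inQ (p q : nat) : bool := inQ_fuel p q q.

Definition inN (p n : nat) : Prop :=
  0 < n /\ squarefree n /\ ~~ (p.-1 %| n) /\ all (inQ p) (primes n).

From mathcomp Require Import all_boot all_algebra fingroup cyclic finfield.
Set Implicit Arguments. Unset Strict Implicit. Unset Printing Implicit Defensive.
Import GRing.Theory FinRing.Theory.

(* For a prime q dividing n, the residues of 1..n cover F_q exactly n/q times,
   so S_n(n) = (n/q) * sum_{x in F_q} x^n in F_q; this power sum is -1 when
   q - 1 | n and 0 otherwise, because the unit group of F_q is cyclic of order
   q - 1.  For q = p the hypothesis S_n(n) = p vanishes mod p, so q - 1 | n
   would force p | n/p.  For q <> p it does not vanish, so q does not divide
   n/q and q - 1 | n.  Thus n is squarefree, p - 1 does not divide n, and the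
   primes q | n/p satisfy q - 1 | n, from which q lies in Q_p by induction. *)

Section FinFieldPowerSums.

Variable F : finFieldType.
Local Open Scope ring_scope.

Lemma expf_card_pred (x : F) : x != 0 -> x ^+ #|F|.-1 = 1.
Proof.
move=> nz_x; apply: (mulfI nz_x); rewrite -exprS mulr1 prednK ?expf_card //.
exact: ltnW (finNzRing_gt1 F).
Qed.

Lemma finField_expf_eq1_dvd k :
  (forall x : F, x != 0 -> x ^+ k = 1) -> (#|F|.-1 %| k)%N.
Proof.
move=> xk1; have [u defU] := cyclicP (field_unit_group_cyclic [set: {unit F}]%G).
rewrite -card_finField_unit defU -orderE order_dvdn -val_eqE val_unitX val_unit1.
by rewrite xk1 // -unitfE (valP u).
Qed.

Lemma sum_expf_neq0_dvd k : \sum_(x : F) x ^+ k != 0 -> (#|F|.-1 %| k)%N.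
Proof.
move=> nz_sum; apply: finField_expf_eq1_dvd => a nz_a.
have : a ^+ k * \sum_(x : F) x ^+ k = 1 * \sum_(x : F) x ^+ k.
  rewrite mul1r mulr_sumr [RHS](reindex_inj (mulfI nz_a)) /=.
  by apply: eq_bigr => x _; rewrite exprMn.
exact: mulIf.
Qed.

Lemma sum_expf_dvd k : (0 < k)%N -> (#|F|.-1 %| k)%N ->
  \sum_(x : F) x ^+ k = (#|F|.-1)%:R.
Proof.
move=> k_gt0 /dvdnP[c def_k]; rewrite (bigD1 0) //= expr0n gtn_eqF // add0r.
rewrite (eq_bigr (fun _ => 1)) => [|x nz_x]; last first.
  by rewrite def_k mulnC exprM expf_card_pred ?expr1n.
by rewrite sumr_const cardC1.
Qed.

End FinFieldPowerSums.

Section PrimeFieldPowerSums.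

Variable q : nat.
Hypothesis q_pr : prime q.
Local Open Scope ring_scope.

Lemma natr_sum_pow_Fp k : (\sum_(i < q) i ^ k)%N%:R = \sum_(x : 'F_q) x ^+ k.
Proof.
have q_gt0 := prime_gt0 q_pr.
rewrite natr_sum (reindex (fun x : 'F_q => Ordinal (ltn_pmod x q_gt0))) /=.
  by apply: eq_bigr => x _; rewrite natrX Fp_nat_mod // natr_Zp.
exists (fun i : 'I_q => i%:R : 'F_q) => [x _ | i _].
  by rewrite Fp_nat_mod // natr_Zp.
by apply: val_inj; rewrite /= val_Fp_nat // !modn_small.
Qed.

Lemma natr_sum_pow_mulFp c k :
  (\sum_(i < c * q) i ^ k)%N%:R = c%:R * \sum_(x : 'F_q) x ^+ k :> 'F_q.
Proof.
rewrite -natr_sum_pow_Fp -natrM -!(big_mkord xpredT (fun i => i ^ k)%N).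
elim: c => [|c IHc]; first by rewrite mul0n big_geq.
rewrite mulSn addnC (@big_cat_nat _ _ _ (c * q)) ?leq_addr //= natrD IHc.
rewrite addrC mulSn natrD -{1}(add0n (c * q)%N) big_addn addKn !natr_sum.
congr (_ + _); apply: eq_bigr => i _.
by rewrite !natrX natrD natrM pchar_Fp_0 // mulr0 addr0.
Qed.

Lemma natr_S_Fp n k : (0 < k)%N -> (q %| n)%N ->
  (S k n)%:R = (n %/ q)%:R * \sum_(x : 'F_q) x ^+ k :> 'F_q.
Proof.
move=> k_gt0 q_dvd_n.
have -> : S k n = (\sum_(0 <= i < n) i ^ k + n ^ k)%N.
  by rewrite /S -big_nat_recr //= [in RHS]big_ltn // exp0n.
rewrite natrD natrX -{2}(divnK q_dvd_n) natrM pchar_Fp_0 // mulr0 expr0n.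
by rewrite gtn_eqF // addr0 big_mkord -natr_sum_pow_mulFp divnK.
Qed.

End PrimeFieldPowerSums.

Lemma squarefree_dvd x d :
  (forall q, prime q -> ~~ (q * q %| x)) -> d %| x -> squarefree d.
Proof.
move=> sq_ndvd_x d_dvd_x; apply/forallP => e; apply/implyP => e_gt1.
apply: contra (sq_ndvd_x _ (pdiv_prime e_gt1)) => ee_dvd_d.
by apply: dvdn_trans (dvdn_trans ee_dvd_d d_dvd_x); rewrite dvdn_mul ?pdiv_dvd.
Qed.

Section SumPowResidue.

Variables p n : nat.
Hypotheses (p_pr : prime p) (n_gt0 : 0 < n) (S_nn : S n n = p %[mod n]).
Hypotheses (p_dvd_n : p %| n) (p2_ndvd_n : ~~ (p * p %| n)).

Lemma natr_p_Fp q : prime q -> q %| n ->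
  (p%:R = (n %/ q)%:R * \sum_(x : 'F_q) x ^+ n :> 'F_q)%R.
Proof.
move=> q_pr q_dvd_n; rewrite -natr_S_Fp //.
by rewrite -(Fp_nat_mod q_pr) -(modn_dvdm _ q_dvd_n) -S_nn modn_dvdm // Fp_nat_mod.
Qed.

Lemma pred_p_ndvd_n : ~~ (p.-1 %| n).
Proof.
apply/negP => pred_p_dvd_n; have := natr_p_Fp p_pr p_dvd_n.
rewrite sum_expf_dvd ?card_Fp // pchar_Fp_0 // -natrM => /esym/eqP.
rewrite -(dvdn_pcharf (pchar_Fp p_pr)) Euclid_dvdM // dvdn_divRL //.
by rewrite (negbTE p2_ndvd_n) gtnNdvd ?ltn_predRL ?prime_gt1 ?ltn_predL ?prime_gt0.
Qed.

Lemma natr_quo_sum_pow_neq0 q : prime q -> q %| n -> q != p ->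
  ((n %/ q)%:R * \sum_(x : 'F_q) x ^+ n != 0 :> 'F_q)%R.
Proof.
move=> q_pr q_dvd_n q_neq_p.
by rewrite -natr_p_Fp // -(dvdn_pcharf (pchar_Fp q_pr)) dvdn_prime2.
Qed.

Lemma prime_sq_ndvd_n q : prime q -> ~~ (q * q %| n).
Proof.
move=> q_pr; have [->|q_neq_p] := eqVneq q p; first exact: p2_ndvd_n.
have [q_dvd_n|] := boolP (q %| n); last first.
  by apply: contra; apply: dvdn_trans; rewrite dvdn_mulr.
have := natr_quo_sum_pow_neq0 q_pr q_dvd_n q_neq_p.
by rewrite mulf_eq0 negb_or -(dvdn_pcharf (pchar_Fp q_pr)) dvdn_divRL // => /andP[].
Qed.

Lemma pred_prime_dvd_n q : prime q -> q %| n -> q != p -> q.-1 %| n.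
Proof.
move=> q_pr q_dvd_n q_neq_p; have := natr_quo_sum_pow_neq0 q_pr q_dvd_n q_neq_p.
by rewrite mulf_eq0 negb_or => /andP[_ /sum_expf_neq0_dvd]; rewrite card_Fp.
Qed.

Lemma inQ_fuel_dvd_n f q : q <= f -> prime q -> q %| n -> q != p -> inQ_fuel p f q.
Proof.
elim: f q => [|f IHf] q le_q_f q_pr q_dvd_n q_neq_p.
  by have := prime_gt0 q_pr; rewrite ltnNge le_q_f.
have pred_q_dvd_n := pred_prime_dvd_n q_pr q_dvd_n q_neq_p.
have pred_p_ndvd_pred_q : ~~ (p.-1 %| q.-1).
  by apply: contra pred_p_ndvd_n => /dvdn_trans; apply.
rewrite /= q_pr (squarefree_dvd prime_sq_ndvd_n pred_q_dvd_n) pred_p_ndvd_pred_q /=.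
apply/allP => t; rewrite mem_primes => /and3P[t_pr pred_q_gt0 t_dvd].
have [//|t_neq_p] := eqVneq t p; apply: IHf => //; last exact: dvdn_trans t_dvd _.
apply: leq_trans (dvdn_leq pred_q_gt0 t_dvd) _.
by rewrite -ltnS prednK ?prime_gt0.
Qed.

End SumPowResidue.

Theorem mainTheorem4 (p : nat) (hp : prime p) (n : nat) :
  inM1 p n -> exists m, inN p m /\ n = p * m.
Proof.
move=> [[n_gt0 S_nn] [p_dvd_n p2_ndvd_n]].
have m_dvd_n : n %/ p %| n := dvdn_div p_dvd_n.
have p_ndvd_m : ~~ (p %| n %/ p) by rewrite dvdn_divRL.
exists (n %/ p); split; last by rewrite mulnC divnK.
split; first by rewrite divn_gt0 ?prime_gt0 // dvdn_leq.
split.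
  exact: squarefree_dvd (prime_sq_ndvd_n hp n_gt0 S_nn p2_ndvd_n) m_dvd_n.
split.
  have := pred_p_ndvd_n hp n_gt0 S_nn p_dvd_n p2_ndvd_n.
  by apply: contra => /dvdn_trans; apply.
apply/allP => q; rewrite mem_primes => /and3P[q_pr _ q_dvd_m].
apply: (inQ_fuel_dvd_n hp n_gt0 S_nn p_dvd_n p2_ndvd_n) => //.
  exact: dvdn_trans q_dvd_m m_dvd_n.
by apply: contraTneq q_dvd_m => ->.
Qed.
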